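(* Let $\{e_i\}_{i=1}^\infty$ be the canonical orthonormal basis of the real Hilbert space $\ell_2$, let $a_i\neq0$ be real numbers with $\sum_i a_i^2<\infty$, let $x_k=a_k(e_1+e_{k+1})$, let $L$ be the right shift $L(c_1,c_2,\dots)=(0,c_1,c_2,\dots)$, and let $\mathcal{X}=\{e_i\}_{i=1}^\infty\cup\{2^{-i}L^ix_k\}_{i=0,k=1}^{\infty,\infty}$ (an injective frame for $\ell_2$). Then for every $\epsilon>0$ there is a frame $\mathcal{Y}$ for $\ell_2$ (indexed by the same index set) such that $d(\mathcal{X},\mathcal{Y})<\epsilon$ and $\mathcal{Y}$ is not injective.
   Context: A family $\{y_k\}$ in $\ell_2$ is called injective if whenever a Hilbert–Schmidt self-adjoint operator $T$ on $\ell_2$ satisfies $\langle Ty_k,y_k\rangle=0$ for all $k$, then $T=0$. For frames $\mathcal{X}=\{x_k\}$ and $\mathcal{Y}=\{y_k\}$ indexed by the same set, $d^2(\mathcal{X},\mathcal{Y})=\sum_k\|x_k-y_k\|^2$ (possibly infinite). *)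

From HB Require Import structures.
From mathcomp Require Import all_boot all_order all_algebra.
From mathcomp Require Import all_classical all_reals all_analysis.
Set Implicit Arguments. Unset Strict Implicit. Unset Printing Implicit Defensive.
Import Order.TTheory GRing.Theory Num.Theory.
Import numFieldNormedType.Exports.
Local Open Scope classical_set_scope.
Local Open Scope ring_scope.

(* Real l2 is modelled as the square-summable sequences nat -> R
   (coordinates w.r.t. the canonical basis; index 0 = e_1). *)
Section L2.
Variable R : realType.

Definition in_l2 (x : nat -> R) : Prop :=
  (\esum_(i in [set: nat]) ((x i) ^+ 2)%:E < +oo)%E.

Definition l2inner (x y : nat -> R) : R := limn (series (fun i => x i * y i)).
Definition l2normsq (x : nat -> R) : R := limn (series (fun i => x i ^+ 2)).

Definition evec (n : nat) : nat -> R := fun m => if m == n then 1 else 0.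

Definition rshift (c : nat -> R) : nat -> R :=
  fun m => if m is m'.+1 then c m' else 0.

Definition is_frame (I : choiceType) (y : I -> nat -> R) : Prop :=
  (forall k, in_l2 (y k)) /\
  exists A B : R, 0 < A /\ 0 < B /\
    forall f, in_l2 f ->
      ((A * l2normsq f)%:E <= \esum_(k in [set: I]) ((l2inner f (y k)) ^+ 2)%:E)%E /\
      (\esum_(k in [set: I]) ((l2inner f (y k)) ^+ 2)%:E <= (B * l2normsq f)%:E)%E.

(* Hilbert-Schmidt self-adjoint operator on l2: a map T defined on l2,
   mapping l2 to l2, linear, bounded, self-adjoint, and with
   sum_i ||T e_i||^2 < oo. Only its values on l2 matter. *)
Definition HS_selfadjoint (T : (nat -> R) -> (nat -> R)) : Prop :=
  (forall x, in_l2 x -> in_l2 (T x)) /\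
  (forall (a : R) x y, in_l2 x -> in_l2 y ->
      T (fun n => a * x n + y n) = (fun n => a * T x n + T y n)) /\
  (exists C : R, forall x, in_l2 x -> l2normsq (T x) <= C * l2normsq x) /\
  (forall x y, in_l2 x -> in_l2 y -> l2inner (T x) y = l2inner x (T y)) /\
  (\esum_(i in [set: nat]) (l2normsq (T (evec i)))%:E < +oo)%E.

Definition injective_family (I : choiceType) (y : I -> nat -> R) : Prop :=
  forall T, HS_selfadjoint T ->
    (forall k, l2inner (T (y k)) (y k) = 0) ->
    forall x, in_l2 x -> T x = (fun _ => 0).

Definition frame_dist_sq (I : choiceType) (x y : I -> nat -> R) : \bar R :=
  \esum_(k in [set: I]) (l2normsq (fun n => x k n - y k n))%:E.

(* x_k = a_k (e_1 + e_{k+1}), k >= 1; 0-indexed: xk a k = a k (e 0 + e (k+1)) *)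
Definition xk (a : nat -> R) (k : nat) : nat -> R :=
  fun n => a k * (evec 0 n + evec k.+1 n).

(* index set: inl n <-> e_{n+1};  inr (i,k) <-> 2^{-i} L^i x_{k+1} *)
Definition Xfam (a : nat -> R) : nat + (nat * nat) -> nat -> R :=
  fun j => match j with
           | inl n => evec n
           | inr (i, k) => fun n => (2 ^- i) * iter i rshift (xk a k) n
           end.
End L2.

From Pilot Require Import Defs.
From HB Require Import structures.
From mathcomp Require Import all_boot all_order all_algebra.
From mathcomp Require Import all_classical all_reals all_analysis.
From mathcomp Require Import zify ring lra.
Set Implicit Arguments. Unset Strict Implicit. Unset Printing Implicit Defensive.
Import Order.TTheory GRing.Theory Num.Theory.
Import numFieldNormedType.Exports.
Local Open Scope classical_set_scope.
Local Open Scope ring_scope.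

(** Fix N and count coordinates from 0, so that e_{n+1} is coordinate n. The
   only member of X whose coordinates N and N+1 are both nonzero is
   2^{-N} L^N x_1 = 2^{-N} a_1 (e_{N+1} + e_{N+2}); replacing it by 0 moves X by
   2^{1/2-N} |a_1|, which is small for N large. The perturbed family Y still
   contains the orthonormal basis, and each other member 2^{-i} L^i x_k has
   Bessel bound 4^{1-i} a_k^2, which is summable over (i, k); so Y is a frame.
   But y_N y_{N+1} = 0 for every y in Y, so the self-adjoint rank-two operator
   T f = f_{N+1} e_N + f_N e_{N+1}, for which <T f, f> = 2 f_N f_{N+1},
   satisfies <T y, y> = 0 on Y although T <> 0. *)

Section l2_facts.
Variable R : realType.
Implicit Types (u x y f : nat -> R) (m n P : nat).

Lemma series_support_lt u P m : (forall n, (P <= n)%N -> u n = 0) ->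
  (P <= m)%N -> series u m = \sum_(k < P) u k.
Proof.
move=> u0 Pm; rewrite seriesEnat /= (big_cat_nat (leq0n P) Pm) /= big_mkord.
rewrite [X in _ + X]big1_seq ?addr0 // => k /andP[_].
by rewrite mem_index_iota => /andP[/u0].
Qed.

Lemma lim_series_support_lt u P : (forall n, (P <= n)%N -> u n = 0) ->
  limn (series u) = \sum_(k < P) u k.
Proof.
by move=> u0; apply: lim_near_cst => //; exists P => // m /= /(series_support_lt u0).
Qed.

Lemma eseries_support_lt u P : (forall n, (P <= n)%N -> u n = 0) ->
  (\sum_(k <oo) (u k)%:E = (\sum_(k < P) u k)%:E)%E.
Proof.
move=> u0; apply: lim_near_cst => //; exists P => // m /= Pm.
by rewrite sumEFin -(series_support_lt u0 Pm) seriesEnat.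
Qed.

Lemma in_l2_support_lt x P : (forall n, (P <= n)%N -> x n = 0) -> in_l2 x.
Proof.
move=> x0; rewrite /in_l2 -nneseries_esumT => [|n]; last by rewrite lee_fin sqr_ge0.
by rewrite (@eseries_support_lt _ P) ?ltry // => n /x0 ->; rewrite expr0n.
Qed.

Lemma l2inner_sym x y : l2inner x y = l2inner y x.
Proof. by rewrite /l2inner; congr (limn (series _)); apply/funext => n; rewrite mulrC. Qed.

Lemma l2normsqE x : l2normsq x = l2inner x x.
Proof. by rewrite /l2inner /l2normsq; congr (limn (series _)); apply/funext => n; rewrite expr2. Qed.

Lemma l2inner0 x : l2inner x (fun _ => 0) = 0.
Proof. by rewrite /l2inner (@lim_series_support_lt _ 0) ?big_ord0 // => n _; rewrite mulr0. Qed.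

Lemma l2normsq0 : l2normsq (fun _ : nat => (0 : R)) = 0.
Proof. by rewrite l2normsqE l2inner0. Qed.

Lemma is_cvg_series_sqr f : in_l2 f -> cvgn (series (fun n => f n ^+ 2)).
Proof.
move=> f2; apply: nnseries_is_cvg => [n|]; first exact: sqr_ge0.
by rewrite nneseries_esumT // => n; rewrite lee_fin sqr_ge0.
Qed.

Lemma esum_sqr_l2normsq f : in_l2 f ->
  (\esum_(n in [set: nat]) (f n ^+ 2)%:E = (l2normsq f)%:E)%E.
Proof.
move=> f2; rewrite -nneseries_esumT => [|n]; last by rewrite lee_fin sqr_ge0.
rewrite /l2normsq -EFin_lim; last exact: is_cvg_series_sqr.
by congr (limn _); apply/funext => m; rewrite /= sumEFin seriesEnat.
Qed.

Lemma sqr_le_l2normsq f n : in_l2 f -> f n ^+ 2 <= l2normsq f.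
Proof.
move=> f2.
have nd : nondecreasing_seq (series (fun k => f k ^+ 2)).
  move=> p q pq; rewrite !seriesEnat.
  by apply: (nondecreasing_series (P := predT)) => // k _ _; exact: sqr_ge0.
apply: le_trans (nondecreasing_cvgn_le nd (is_cvg_series_sqr f2) n.+1).
by rewrite seriesSr lerDr seriesEnat; apply: sumr_ge0 => k _; exact: sqr_ge0.
Qed.

Lemma l2normsq_ge0 f : in_l2 f -> 0 <= l2normsq f.
Proof. by move=> f2; apply: le_trans (sqr_le_l2normsq 0 f2); exact: sqr_ge0. Qed.

Lemma sum_mul_evec (F : nat -> R) P n : (n < P)%N ->
  \sum_(k < P) F k * evec R n k = F n.
Proof.
move=> nP; rewrite (bigD1 (Ordinal nP)) //= /evec eqxx mulr1 big1 ?addr0 //.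
by move=> k nk; rewrite ifN ?mulr0 //; apply: contra nk => /eqP kn; apply/eqP/val_inj.
Qed.

Lemma evec_in_l2 n : in_l2 (evec R n).
Proof. by apply: (@in_l2_support_lt _ n.+1) => m nm; rewrite /evec ifN //; apply/eqP; lia. Qed.

Lemma l2inner_evec f n : l2inner f (evec R n) = f n.
Proof.
rewrite /l2inner (@lim_series_support_lt _ n.+1) ?sum_mul_evec // => m nm.
by rewrite /evec ifN ?mulr0 //; apply/eqP; lia.
Qed.

End l2_facts.

Section esum_facts.
Variable R : realType.
Local Open Scope ereal_scope.

Lemma ge0_esumZl (T : choiceType) (S : set T) (r : R) (u : T -> \bar R) :
  (0 <= r)%R -> (forall t, 0 <= u t) ->
  \esum_(t in S) r%:E * u t = r%:E * \esum_(t in S) u t.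
Proof.
move=> r0 u0; rewrite /esum -ereal_supZl //; last first.
  by apply/set0P; exists 0; exists set0; [exact: fsets_set0 | rewrite fsbig_set0].
by rewrite image_comp; congr ereal_sup; apply: eq_imagel => A _ /=; rewrite ge0_mule_fsumr.
Qed.

Lemma esum_sum_type (A B : choiceType) (u : A + B -> \bar R) :
  (forall t, 0 <= u t) ->
  \esum_(t in [set: A + B]) u t =
  \esum_(t in [set: A]) u (inl t) + \esum_(t in [set: B]) u (inr t).
Proof.
move=> u0; rewrite (esumID (range inl)) // setTI.
have -> : [set: A + B] `&` ~` range inl = inr @` setT.
  apply/seteqP; split => [[a [_ []]|b _]|_ [b _ <-]]; first by exists a.
    by exists b.
  by split => // -[].
by rewrite !esum_image // => s t _ _ [].
Qed.

Lemma esum_geometric_sqr_lt (z : R) (a : nat -> R) :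
  (0 <= z < 1)%R -> in_l2 a ->
  \esum_(p in [set: nat * nat]) (z ^+ p.1 * a p.2 ^+ 2)%:E < +oo.
Proof.
move=> /andP[z0 z1] a2.
have -> : [set: nat * nat] = [set: nat] `*`` (fun _ => [set: nat]) by apply/seteqP; split.
rewrite -(esum_esum (a := fun i k => (z ^+ i * a k ^+ 2)%:E)); last first.
  by move=> i k _ _; rewrite lee_fin; apply: mulr_ge0; [exact: exprn_ge0 | exact: sqr_ge0].
rewrite (eq_esum (b := fun i => (geometric (l2normsq a) z i)%:E)) => [|i _]; last first.
  rewrite (eq_esum (b := fun k => (z ^+ i)%:E * (a k ^+ 2)%:E)) => [|k _]; last by rewrite EFinM.
  rewrite ge0_esumZl ?exprn_ge0 // => [|k]; last by rewrite lee_fin sqr_ge0.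
  by rewrite esum_sqr_l2normsq // -EFinM mulrC.
rewrite -nneseries_esumT => [|i]; last by rewrite lee_fin mulr_ge0 ?exprn_ge0 ?l2normsq_ge0.
have cvg_geo : cvgn (series (geometric (l2normsq a) z)).
  by apply: is_cvg_geometric_series; rewrite ger0_norm.
rewrite (_ : \sum_(i <oo) _ = (limn (series (geometric (l2normsq a) z)))%:E) ?ltry //.
by rewrite -EFin_lim //; congr (limn _); apply/funext => n; rewrite /= sumEFin seriesEnat.
Qed.
End esum_facts.

Section frames.
Variable R : realType.

Lemma is_frame_basis_bessel (J : choiceType) (Y : nat + J -> nat -> R) (c : J -> R) :
  (forall n, Y (inl n) = evec R n) -> (forall j, in_l2 (Y (inr j))) ->
  (forall j, 0 <= c j) -> (\esum_(j in [set: J]) (c j)%:E < +oo)%E ->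
  (forall f j, in_l2 f -> l2inner f (Y (inr j)) ^+ 2 <= c j * l2normsq f) ->
  is_frame Y.
Proof.
move=> Yl Yr c0 c_fin bessel.
split => [[n|j]|]; [by rewrite Yl; exact: evec_in_l2 | exact: Yr |].
set K := \esum_(j in [set: J]) (c j)%:E.
have K_fin : K \is a fin_num by rewrite ge0_fin_numE // esum_ge0 // => j _; rewrite lee_fin.
exists 1, (1 + fine K); split => //; split.
  by rewrite ltr_pwDl // fine_ge0 // esum_ge0 // => j _; rewrite lee_fin.
move=> f f2; rewrite esum_sum_type => [|t]; last by rewrite lee_fin sqr_ge0.
have -> : (\esum_(n in [set: nat]) (l2inner f (Y (inl n)) ^+ 2)%:E = (l2normsq f)%:E)%E.
  by rewrite -esum_sqr_l2normsq //; apply: eq_esum => n _; rewrite Yl l2inner_evec.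
have bessel_sum : (\esum_(j in [set: J]) (l2inner f (Y (inr j)) ^+ 2)%:E
    <= (l2normsq f * fine K)%:E)%E.
  rewrite EFinM fineK // -ge0_esumZl ?l2normsq_ge0 //.
  by apply: le_esum => j _; rewrite -EFinM lee_fin mulrC bessel.
split; first by rewrite mul1r leeDl // esum_ge0 // => j _; rewrite lee_fin sqr_ge0.
apply: le_trans (leeD2l _ bessel_sum) _.
by rewrite -EFinD lee_fin mulrDl mul1r mulrC.
Qed.

Definition zero_at (I : choiceType) (j0 : I) (X : I -> nat -> R) : I -> nat -> R :=
  fun j => if j == j0 then (fun _ => 0) else X j.

Lemma frame_dist_sq_zero_at (I : choiceType) (X : I -> nat -> R) j0 :
  in_l2 (X j0) -> frame_dist_sq X (zero_at j0 X) = (l2normsq (X j0))%:E.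
Proof.
move=> X2; rewrite /frame_dist_sq.
rewrite (eq_esum (b := fun j => if j \in [set j0] then (l2normsq (X j0))%:E else 0%E)).
  by rewrite -esum_mkcond esum_set1 // lee_fin l2normsq_ge0.
move=> j _; rewrite /zero_at in_set1; have [->|_] := eqVneq j j0.
  by congr (EFin (l2normsq _)); apply/funext => n; rewrite subr0.
by rewrite (_ : (fun n => _) = fun _ => 0) ?l2normsq0 //; apply/funext => n; rewrite subrr.
Qed.

End frames.

Section swap_operator.
Variable R : realType.

Definition swap_op (m n : nat) (x : nat -> R) : nat -> R :=
  fun p => x n * evec R m p + x m * evec R n p.

Lemma swap_op_support m n x p : ((maxn m n).+1 <= p)%N -> swap_op m n x p = 0.
Proof. by move=> mnp; rewrite /swap_op /evec !ifN ?mulr0 ?addr0 //; apply/eqP; lia. Qed.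

Lemma l2inner_swap_op m n x y : l2inner (swap_op m n x) y = x n * y m + x m * y n.
Proof.
rewrite /l2inner (@lim_series_support_lt _ _ (maxn m n).+1) => [|p mnp]; last first.
  by rewrite swap_op_support ?mul0r.
have E p : swap_op m n x p * y p = x n * y p * evec R m p + x m * y p * evec R n p.
  by rewrite /swap_op; ring.
under eq_bigr do rewrite E.
rewrite big_split /= (sum_mul_evec (fun p => x n * y p)) //; last lia.
by rewrite (sum_mul_evec (fun p => x m * y p)) //; lia.
Qed.

Lemma HS_selfadjoint_swap_op m n : HS_selfadjoint (swap_op m n).
Proof.
have swap_in_l2 x : in_l2 (swap_op m n x).
  by apply: (@in_l2_support_lt _ _ (maxn m n).+1); apply: swap_op_support.
split; first by move=> x _; exact: swap_in_l2.
split; first by move=> c x y _ _; apply/funext => p; rewrite /swap_op; ring.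
split.
  exists 4 => x x2; rewrite l2normsqE l2inner_swap_op /swap_op /evec !eqxx !mulr1 [n == m]eq_sym.
  have := sqr_le_l2normsq m x2; have := sqr_le_l2normsq n x2.
  by case: eqP => [->|_]; rewrite ?mulr0 ?addr0 ?add0r; nra.
split; first by move=> x y _ _; rewrite l2inner_swap_op l2inner_sym l2inner_swap_op; ring.
rewrite -nneseries_esumT => [|p]; last by rewrite lee_fin l2normsq_ge0 ?swap_in_l2.
rewrite (@eseries_support_lt _ _ (maxn m n).+1) ?ltry // => p mnp.
rewrite (_ : swap_op m n (evec R p) = fun _ => 0) ?l2normsq0 //.
have /andP[/negbTE pm /negbTE pn] : (m != p) && (n != p) by apply/andP; split; apply/eqP; lia.
by apply/funext => q; rewrite /swap_op /evec pm pn !mul0r addr0.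
Qed.

Lemma not_injective_family_coord_mul0 (I : choiceType) (Y : I -> nat -> R) m n :
  m != n -> (forall i, Y i m * Y i n = 0) -> ~ injective_family Y.
Proof.
move=> mn Y0 injY.
have T0 i : l2inner (swap_op m n (Y i)) (Y i) = 0.
  by rewrite l2inner_swap_op mulrC Y0 addr0.
have := injY _ (HS_selfadjoint_swap_op m n) T0 _ (evec_in_l2 R m).
move=> /(congr1 (fun g => g n)); rewrite /swap_op /evec !eqxx eq_sym (negbTE mn).
by rewrite mul0r add0r mulr1 => /eqP; rewrite oner_eq0.
Qed.

End swap_operator.

Section perturbed_family.
Variables (R : realType) (a : nat -> R).

Let coef_ge0 i k : 0 <= 4^-1 ^+ i * a k ^+ 2 :> R.
Proof. by rewrite mulr_ge0 ?sqr_ge0 // exprn_ge0 // invr_ge0 ler0n. Qed.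

Let sqr_halfX i : (2 ^- i) ^+ 2 = 4^-1 ^+ i :> R.
Proof. by rewrite -exprVn exprAC exprVn; congr (_^-1 ^+ _); ring. Qed.

Lemma iter_rshiftE (g : nat -> R) i n :
  iter i (@Defs.rshift R) g n = if (i <= n)%N then g (n - i)%N else 0.
Proof. by elim: i n => [|i IH] [|n] //=; rewrite ?subn0 // IH subSS. Qed.

Lemma Xfam_inrE i k n :
  Xfam a (inr (i, k)) n = 2 ^- i * a k * (evec R i n + evec R (i + k).+1 n).
Proof.
rewrite /= iter_rshiftE /xk /evec -mulrA; case: leqP => [le_in|lt_ni].
  by congr (_ * (_ * (_ + _))); congr (if _ then _ else _); apply/eqP/eqP; lia.
by rewrite !ifN ?addr0 ?mulr0 //; apply/eqP; lia.
Qed.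

Lemma Xfam_support i k n : ((i + k).+2 <= n)%N -> Xfam a (inr (i, k)) n = 0.
Proof. by move=> ikn; rewrite Xfam_inrE /evec !ifN ?addr0 ?mulr0 //; apply/eqP; lia. Qed.

Lemma Xfam_in_l2 j : in_l2 (Xfam a j).
Proof.
case: j => [n|[i k]]; first exact: evec_in_l2.
by apply: (@in_l2_support_lt _ _ (i + k).+2) => n; apply: Xfam_support.
Qed.

Lemma l2inner_Xfam_inr f i k :
  l2inner f (Xfam a (inr (i, k))) = 2 ^- i * a k * (f i + f (i + k).+1).
Proof.
rewrite /l2inner (@lim_series_support_lt _ _ (i + k).+2) => [|n ikn]; last first.
  by rewrite Xfam_support ?mulr0.
have E n : f n * Xfam a (inr (i, k)) n =
    2 ^- i * a k * f n * evec R i n + 2 ^- i * a k * f n * evec R (i + k).+1 n.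
  by rewrite Xfam_inrE; ring.
under eq_bigr do rewrite E.
rewrite big_split /= !(sum_mul_evec (fun n => 2 ^- i * a k * f n)) -?mulrDr //; lia.
Qed.

Lemma sqr_l2inner_Xfam_inr_le f i k : in_l2 f ->
  l2inner f (Xfam a (inr (i, k))) ^+ 2 <= 4 * (4^-1 ^+ i * a k ^+ 2) * l2normsq f.
Proof.
move=> f2; rewrite l2inner_Xfam_inr !exprMn sqr_halfX [4 * _]mulrC -[X in _ <= X]mulrA.
apply: ler_wpM2l => //.
have := sqr_le_l2normsq i f2; have := sqr_le_l2normsq (i + k).+1 f2.
nra.
Qed.

Lemma l2normsq_Xfam_inr0 N : l2normsq (Xfam a (inr (N, 0))) = 2 * a 0 ^+ 2 * 4^-1 ^+ N.
Proof.
have XN n : n \in [:: N; N.+1] -> Xfam a (inr (N, 0)) n = 2 ^- N * a 0.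
  rewrite !inE Xfam_inrE addn0 /evec => /orP[]/eqP ->.
    by rewrite eqxx ifN ?addr0 ?mulr1 //; apply/eqP; lia.
  by rewrite eqxx ifN ?add0r ?mulr1 //; apply/eqP; lia.
rewrite l2normsqE l2inner_Xfam_inr addn0 !XN ?inE ?eqxx ?orbT // -sqr_halfX; ring.
Qed.

Lemma Xfam_coord_mul0 N j : j != inr (N, 0) -> Xfam a j N * Xfam a j N.+1 = 0.
Proof.
case: j => [n _|[i k] ik].
  by rewrite /= /evec; case: (N =P n) => [<-|_]; rewrite ?mul0r // gtn_eqF ?mulr0.
have {}ik : i <> N \/ k <> 0%N.
  by case: (i =P N) => [iN|]; [right => k0; move: ik; rewrite iN k0 eqxx | left].
rewrite !Xfam_inrE /evec; do 4!case: eqP => ?; rewrite ?(mulr0, mul0r, addr0, add0r) //; lia.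
Qed.

Lemma is_frame_zero_at_Xfam N : in_l2 a -> is_frame (zero_at (inr (N, 0)) (Xfam a)).
Proof.
move=> a2; set c := fun p : nat * nat => 4 * (4^-1 ^+ p.1 * a p.2 ^+ 2).
have c_ge0 p : 0 <= c p by apply: mulr_ge0; [exact: ler0n | exact: coef_ge0].
apply: (@is_frame_basis_bessel _ _ _ c) => //.
- move=> j; rewrite /zero_at; case: eqP => _; last exact: Xfam_in_l2.
  exact: (@in_l2_support_lt _ _ 0).
- rewrite (eq_esum (b := fun p => 4%:E * (4^-1 ^+ p.1 * a p.2 ^+ 2)%:E)%E);
    last by move=> p _; rewrite EFinM.
  rewrite ge0_esumZl; [|exact: ler0n|by move=> p; rewrite lee_fin].
  by rewrite lte_mul_pinfty // esum_geometric_sqr_lt // invr_ge0 ler0n invf_lt1 ?ltr1n.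
- move=> f [i k] f2; rewrite /zero_at; case: eqP => _; last exact: sqr_l2inner_Xfam_inr_le.
  by rewrite l2inner0 expr0n /= mulr_ge0 ?l2normsq_ge0.
Qed.

Lemma exists_l2normsq_Xfam_lt e : 0 < e -> exists N, l2normsq (Xfam a (inr (N, 0))) < e.
Proof.
move=> e0; have geo0 : geometric (2 * a 0 ^+ 2) (4^-1 : R) @ \oo --> 0.
  by apply: cvg_geometric; rewrite ger0_norm ?invr_ge0 ?ler0n // invf_lt1 ?ltr1n.
have [N _ geo_lt] := cvgr_lt _ geo0 _ e0.
by exists N; rewrite l2normsq_Xfam_inr0; apply: geo_lt => /=.
Qed.

End perturbed_family.

Theorem mainTheorem15 (R : realType) (a : nat -> R)
  (ha0 : forall i, a i != 0) (ha2 : in_l2 a) :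
  forall eps : R, 0 < eps ->
    exists Y : nat + (nat * nat) -> nat -> R,
      is_frame Y /\
      (frame_dist_sq (Xfam a) Y < (eps ^+ 2)%:E)%E /\
      ~ injective_family Y.
Proof.
(* [ha0] is what makes X itself injective; the perturbation does not need it. *)
move=> eps eps0.
have [N small] := exists_l2normsq_Xfam_lt a (exprn_gt0 2 eps0).
exists (zero_at (inr (N, 0%N)) (Xfam a)); split; first exact: is_frame_zero_at_Xfam.
split; first by rewrite frame_dist_sq_zero_at ?lte_fin //; exact: Xfam_in_l2.
apply: (@not_injective_family_coord_mul0 _ _ _ N N.+1); first by rewrite neq_ltn ltnSn.
move=> j; rewrite /zero_at; case: eqP => [_|/eqP]; first by rewrite mul0r.
exact: Xfam_coord_mul0.
Qed.
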